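(* For any projectors $P,Q$ and program $S$: (a) $\{P\};S\equiv\{P\};S;\{Q\}$ iff $sp.S.P\sqsubseteq Q$ iff $P\sqsubseteq wlp.S.Q$ iff $\models\{P\}S\{Q\}$; (b) $S;\{Q\}\equiv\{P\};S;\{Q\}$ iff $sp.S.P^\perp\sqsubseteq Q^\perp$ iff $P^\perp\sqsubseteq wlp.S.Q^\perp$ iff $\models\{P^\perp\}S\{Q^\perp\}$.
   Context: $V$ finite set of qubit variables, $\mathcal{H}_W=\bigotimes_{q\in W}\mathcal{H}_q$, $\mathcal{H}_q\cong\mathbb{C}^2$; operators on subsystems identified with their extension by identity to $\mathcal{H}_V$. Projectors identified with subspaces; $\sqsubseteq$ inclusion (Löwner order); $P^\perp$ orthocomplement. $\rho\models P$ iff the support of $\rho$ is contained in $P$. For a projector $P$ on a register $\bar q$, $\{P\}$ abbreviates the program $\mathbf{assert}\ P[\bar q]$, whose denotation is $\{\rho\mapsto P\rho P\}$. Programs: $S::=\mathbf{skip}\mid\mathbf{abort}\mid \bar q:=0\mid \bar q \mathrel{*}= U\mid \mathbf{assert}\ P[\bar q]\mid [P,Q]_{\bar q}\mid S_0\oplus_p S_1\mid S_0;S_1\mid \mathbf{if}\ P[\bar q]\ \mathbf{then}\ S_1\ \mathbf{else}\ S_0\ \mathbf{end}\mid \mathbf{while}\ P[\bar q]\ \mathbf{do}\ S\ \mathbf{end}$ with denotations (sets of super-operators): $\{\mathrm{id}\}$, $\{0\}$, $\{\rho\mapsto\sum_i|0\rangle_{\bar q}\langle i|\rho|i\rangle_{\bar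 q}\langle 0|\}$, $\{\rho\mapsto U\rho U^\dagger\}$, $\{\rho\mapsto P\rho P\}$, $\{\mathcal{E}$ completely positive trace-nonincreasing on $\mathcal{H}_{\bar q}:\forall\rho\models P,\mathcal{E}(\rho)\models Q\}$, $\{p\mathcal{E}_0+(1-p)\mathcal{E}_1\}$, $\{\mathcal{E}_1\circ\mathcal{E}_0\}$, $\{\mathcal{E}_1\circ\mathcal{P}+\mathcal{E}_0\circ\mathcal{P}^\perp\}$, $\{\sum_{k\ge0}\mathcal{P}^\perp\circ\mathcal{E}_k\circ\mathcal{P}\circ\cdots\circ\mathcal{E}_1\circ\mathcal{P}\}$ respectively, with $\mathcal{E}_i\in\llbracket S_i\rrbracket$ (resp. $\llbracket S\rrbracket$) chosen independently, $\mathcal{P}(\rho)=P\rho P$, $\mathcal{P}^\perp(\rho)=P^\perp\rho P^\perp$. $\models\{P\}S\{Q\}$ iff for all partial density operators $\rho$ on $\mathcal{H}_V$ and $\mathcal{E}\in\llbracket S\rrbracket$, $\rho\models P\Rightarrow\mathcal{E}(\rho)\models Q$. $wlp.S.Q$ is the (existing) $\sqsubseteq$-greatest $P$ with $\models\{P\}S\{Q\}$; $sp.S.P$ the (existing) $\sqsubseteq$-least $Q$ with $\models\{P\}S\{Q\}$. $S\sqsubseteq S'$ iff for all projectors $P,Q$, $\models\{P\}S\{Q\}\Rightarrow\models\{P\}S'\{Q\}$; $S\equiv S'$ iff $S\sqsubseteq S'$ and $S'\sqsubseteq S$. *)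

From HB Require Import structures.
From mathcomp Require Import all_boot all_order all_algebra.
From mathcomp Require Import reals complex.
From Stdlib Require Import ClassicalEpsilon.
Set Implicit Arguments. Unset Strict Implicit. Unset Printing Implicit Defensive.
Import Order.TTheory GRing.Theory Num.Theory.
Local Open Scope ring_scope.
Local Open Scope complex_scope.

Section QuantumPrograms.
Context (R : realType) (V : finType).

Local Notation C := R[i].

(* An operator on the space with orthonormal basis indexed by the finType I
   is given by its matrix entries  A x y = <x|A|y>.                       *)
Definition opr (I : finType) := I -> I -> C.
Definition vect (I : finType) := I -> C.
Definition superop (I : finType) := opr I -> opr I.

Definition zeroo (I : finType) : opr I := fun _ _ => 0.
Definition ido (I : finType) : opr I := fun x y => if x == y then 1 else 0.
Definition addo (I : finType) (A B : opr I) : opr I := fun x y => A x y + B x y.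
Definition scaleo (I : finType) (a : C) (A : opr I) : opr I := fun x y => a * A x y.
Definition subo (I : finType) (A B : opr I) : opr I := fun x y => A x y - B x y.
Definition mulo (I : finType) (A B : opr I) : opr I :=
  fun x y => \sum_(z : I) A x z * B z y.
Definition adjo (I : finType) (A : opr I) : opr I := fun x y => conjc (A y x).
Definition appo (I : finType) (A : opr I) (v : vect I) : vect I :=
  fun x => \sum_(y : I) A x y * v y.
Definition traceo (I : finType) (A : opr I) : C := \sum_(x : I) A x x.
Definition unito (I : finType) (x y : I) : opr I :=
  fun a b => if (a == x) && (b == y) then 1 else 0.

Definition psd (I : finType) (A : opr I) : Prop :=
  (forall x y, A x y = conjc (A y x)) /\
  (forall v : vect I, 0 <= \sum_(x : I) \sum_(y : I) conjc (v x) * A x y * v y).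
Definition pdo (I : finType) (rho : opr I) : Prop := psd rho /\ traceo rho <= 1.
Definition projector (I : finType) (P : opr I) : Prop :=
  mulo P P = P /\ adjo P = P.
Definition unitary (I : finType) (U : opr I) : Prop :=
  mulo (adjo U) U = @ido I /\ mulo U (adjo U) = @ido I.
Definition subsp (I : finType) (A B : opr I) : Prop :=
  forall v : vect I, exists w : vect I, appo A v = appo B w.
Definition models (I : finType) (rho P : opr I) : Prop := subsp rho P.
(* Loewner order / inclusion of projectors seen as subspaces *)
Definition sqle (I : finType) (P Q : opr I) : Prop := subsp P Q.
Definition orthc (I : finType) (P : opr I) : opr I := subo (@ido I) P.
Definition sandw (I : finType) (A rho : opr I) : opr I := mulo (mulo A rho) (adjo A).

Definition linear_so (I : finType) (E : superop I) : Prop :=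
  forall (a : C) (A B : opr I), E (addo (scaleo a A) B) = addo (scaleo a (E A)) (E B).
(* E (x) id_m acting on H_I (x) C^m *)
Definition ampl (I : finType) (m : nat) (E : superop I) : superop ((I * 'I_m)%type) :=
  fun rho p q => E (fun x y => rho (x, p.2) (y, q.2)) p.1 q.1.
Definition compl_pos (I : finType) (E : superop I) : Prop :=
  forall (m : nat) (rho : opr ((I * 'I_m)%type)), psd rho -> psd (@ampl I m E rho).
Definition trace_nonincr (I : finType) (E : superop I) : Prop :=
  forall rho : opr I, psd rho -> traceo (E rho) <= traceo rho.
Definition cptn (I : finType) (E : superop I) : Prop :=
  [/\ linear_so E, compl_pos E & trace_nonincr E].

(* computational basis of H_V = (x)_{q in V} H_q : assignments V -> bool *)
Definition basis : finType := {ffun V -> bool}.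
(* a register qbar is a (duplicate-free) list of qubit variables; the basis of
   H_qbar = (x)_{i} H_{qbar_i} is indexed by assignments 'I_(size qbar) -> bool *)
Definition lbasis (r : seq V) : finType := {ffun 'I_(size r) -> bool}.
Definition restrict (r : seq V) (x : basis) : lbasis r :=
  [ffun i => x (tnth (in_tuple r) i)].
Definition agree_out (r : seq V) (x y : basis) : bool :=
  [forall v, (v \notin r) ==> (x v == y v)].
(* extension A (x) I_{V \ qbar} of an operator on H_qbar *)
Definition ext (r : seq V) (A : opr (lbasis r)) : opr basis :=
  fun x y => if agree_out r x y then A (restrict r x) (restrict r y) else 0.
(* extension E (x) id_{V \ qbar} of a super-operator on H_qbar *)
Definition ext_so (r : seq V) (E : superop (lbasis r)) : superop basis :=
  fun rho a b => \sum_(x : basis) \sum_(y : basis)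
    rho x y * (if agree_out r a x && agree_out r b y
               then E (unito (restrict r x) (restrict r y)) (restrict r a) (restrict r b)
               else 0).
(* an operator on H_V viewed as an operator on the register enumerating V *)
Definition loc (P : opr basis) : opr (lbasis (enum V)) :=
  fun x y => \sum_(a : basis) \sum_(b : basis)
    (if (restrict (enum V) a == x) && (restrict (enum V) b == y) then P a b else 0).

Inductive prog : Type :=
| Skip
| Abort
| Init (r : seq V)
| Unit (r : seq V) (U : opr (lbasis r))
| Assert (r : seq V) (P : opr (lbasis r))
| Spec (r : seq V) (P Q : opr (lbasis r))
| Choice (p : R) (S0 S1 : prog)
| Seq (S0 S1 : prog)
| If (r : seq V) (P : opr (lbasis r)) (S1 S0 : prog)     (* if P[qbar] then S1 else S0 end *)
| While (r : seq V) (P : opr (lbasis r)) (Sb : prog).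

Fixpoint wf (Sp : prog) : Prop :=
  match Sp with
  | Skip | Abort => True
  | Init r => uniq r
  | Unit r U => uniq r /\ unitary U
  | Assert r P => uniq r /\ projector P
  | Spec r P Q => [/\ uniq r, projector P & projector Q]
  | Choice p S0 S1 => [/\ 0 <= p <= 1, wf S0 & wf S1]
  | Seq S0 S1 => wf S0 /\ wf S1
  | If r P S1 S0 => [/\ uniq r, projector P, wf S1 & wf S0]
  | While r P Sb => [/\ uniq r, projector P & wf Sb]
  end.

Definition cvgC (u : nat -> C) (l : C) : Prop :=
  forall e : R, 0 < e -> exists N : nat, forall n, (N <= n)%N -> `|u n - l| < e%:C.
Definition cvg_op (I : finType) (u : nat -> opr I) (L : opr I) : Prop :=
  forall x y, cvgC (fun n => u n x y) (L x y).
Definition sum_op (I : finType) (n : nat) (f : nat -> opr I) : opr I :=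
  fun x y => \sum_(k < n) f k x y.

(* E_k o P o E_(k-1) o P o ... o E_1 o P  (identity for k = 0),
   with Es 0 = E_1, Es 1 = E_2, ... *)
Fixpoint loop_body (Pm : superop basis) (Es : nat -> superop basis) (k : nat)
  : superop basis :=
  match k with
  | 0 => fun rho => rho
  | k'.+1 => fun rho => Es k' (Pm (loop_body Pm Es k' rho))
  end.

Fixpoint sem (Sp : prog) : superop basis -> Prop :=
  match Sp with
  | Skip => fun E => E = (fun rho => rho)
  | Abort => fun E => E = (fun _ => @zeroo basis)
  | Init r => fun E => E = (fun rho =>
      fun a b => \sum_(i : lbasis r)
        mulo (mulo (ext (unito [ffun _ => false] i)) rho)
             (ext (unito i [ffun _ => false])) a b)
  | Unit r U => fun E => E = sandw (ext U)
  | Assert r P => fun E => E = (fun rho => mulo (mulo (ext P) rho) (ext P))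
  | Spec r P Q => fun E => exists F : superop (lbasis r),
      [/\ cptn F,
          (forall rho, pdo rho -> models rho P -> models (F rho) Q)
        & E = ext_so F]
  | Choice p S0 S1 => fun E => exists E0 E1,
      [/\ sem S0 E0, sem S1 E1 &
          E = (fun rho => addo (scaleo (p%:C) (E0 rho)) (scaleo ((1 - p)%:C) (E1 rho)))]
  | Seq S0 S1 => fun E => exists E0 E1,
      [/\ sem S0 E0, sem S1 E1 & E = (fun rho => E1 (E0 rho))]
  | If r P S1 S0 => fun E => exists E1 E0,
      [/\ sem S1 E1, sem S0 E0 &
          E = (fun rho => addo (E1 (mulo (mulo (ext P) rho) (ext P)))
                               (E0 (mulo (mulo (orthc (ext P)) rho) (orthc (ext P)))))]
  | While r P Sb => fun E => exists Es : nat -> superop basis,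
      (forall k, sem Sb (Es k)) /\
      (forall rho, cvg_op
         (fun n => sum_op n (fun k =>
            let Pp := orthc (ext P) in
            mulo (mulo Pp (loop_body (fun s => mulo (mulo (ext P) s) (ext P)) Es k rho)) Pp))
         (E rho))
  end.

Definition hoare (P : opr basis) (S0 : prog) (Q : opr basis) : Prop :=
  forall (rho : opr basis) (E : superop basis),
    pdo rho -> sem S0 E -> models rho P -> models (E rho) Q.

Definition refines (S0 S1 : prog) : Prop :=
  forall P Q : opr basis, projector P -> projector Q -> hoare P S0 Q -> hoare P S1 Q.
Definition prog_equiv (S0 S1 : prog) : Prop := refines S0 S1 /\ refines S1 S0.

(* weakest liberal precondition and strongest postcondition: the (existing)
   greatest / least projector making the triple valid, picked by choice *)
Definition is_wlp (S0 : prog) (Q W : opr basis) : Prop :=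
  [/\ projector W, hoare W S0 Q &
      forall P, projector P -> hoare P S0 Q -> sqle P W].
Definition is_sp (S0 : prog) (P W : opr basis) : Prop :=
  [/\ projector W, hoare P S0 W &
      forall Q, projector Q -> hoare P S0 Q -> sqle W Q].
Definition wlp (S0 : prog) (Q : opr basis) : opr basis :=
  epsilon (inhabits (@zeroo basis)) (is_wlp S0 Q).
Definition sp (S0 : prog) (P : opr basis) : opr basis :=
  epsilon (inhabits (@zeroo basis)) (is_sp S0 P).

Definition assertV (P : opr basis) : prog := @Assert (enum V) (loc P).

End QuantumPrograms.

(* Every denotation E of a well-formed program is linear and positive: the
   only nontrivial cases are specification statements, which extend a
   completely positive map by the identity, and loops, whose denotations are
   limits of positive maps.

   (a) The denotations of {P};S and {P};S;{Q} agree on all states exactly when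
   E(P rho P) is supported in Q for all rho, which is the triple {P}S{Q}.
   (b) If {P^perp}S{Q^perp} holds then Q E(rho) Q = Q E(P rho P) Q: in the
   decomposition of rho into its four blocks along P and P^perp, the block
   P^perp rho P^perp is killed by Q, and positivity of X |-> Q E(X) Q on
   (P + t P^perp) rho (P + t P^perp)^* for all complex t kills the cross
   blocks, since this quadratic form in t has no |t|^2 term. Conversely
   {P^perp} {P};S;{Q} {0} is always valid, and transfers to S;{Q}.

   sp.S.P and wlp.S.Q exist because every subspace of a finite-dimensional
   space is the range of a projector: for sp take the span of the vectors
   reachable from states satisfying P; for wlp take the vectors u with
   E(|u><u|) supported in Q for all E, a subspace by the same Cauchy-Schwarz
   argument applied to (u, w) |-> tr(Q^perp E(|u><w|) Q^perp). *)

From mathcomp Require Import all_boot all_order all_algebra.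
From mathcomp Require Import reals complex.
From mathcomp Require Import ring lra.
From Pilot Require Import Defs.
From Stdlib Require Import ClassicalEpsilon FunctionalExtensionality Classical.
Set Implicit Arguments. Unset Strict Implicit. Unset Printing Implicit Defensive.
Import Order.TTheory GRing.Theory Num.Theory.
Local Open Scope ring_scope.
Local Open Scope complex_scope.

Notation "A *o B" := (mulo A B) (at level 40, left associativity).

(* [rmorphM] and its siblings restate their conclusion with [Num.conj] of the
   closed field R[i]; these copies keep [conjc] syntactically, for [conjcK]. *)
Section ComplexConjugation.
Context (R : rcfType).
Implicit Types a b : R[i].

Lemma conjcD a b : conjc (a + b) = conjc a + conjc b. Proof. exact: rmorphD. Qed.
Lemma conjcB a b : conjc (a - b) = conjc a - conjc b. Proof. exact: rmorphB. Qed.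
Lemma conjcM a b : conjc (a * b) = conjc a * conjc b. Proof. exact: rmorphM. Qed.
Lemma conjc_sum (J : Type) (r : seq J) (P : pred J) (f : J -> R[i]) :
  conjc (\sum_(j <- r | P j) f j) = \sum_(j <- r | P j) conjc (f j).
Proof. exact: rmorph_sum. Qed.

End ComplexConjugation.

Section QuadraticInequality.
Context (R : realType).

Lemma ler0_quad_bound (r c x : R) : 0 <= r -> 0 <= c -> c * r = 0 ->
  (forall s, 0 < s -> s * x <= s * s * r + c) -> x <= 0.
Proof.
move=> r0 c0 cr0 hs; rewrite leNgt; apply/negP => x0.
have /eqP := cr0; rewrite mulf_eq0 => /orP[/eqP c_eq0|/eqP r_eq0].
  have s0 : 0 < x / (r + 1) by rewrite divr_gt0 // ltr_wpDl.
  have := hs _ s0; rewrite c_eq0 addr0 -mulrA ler_pM2l // mulrAC ler_pdivlMr ?ltr_wpDl //.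
  by nra.
have s0 : 0 < (c + 1) / x by rewrite divr_gt0 // ltr_wpDl.
have := hs _ s0; rewrite r_eq0 mulr0 add0r -mulrA mulVf ?gt_eqF // mulr1.
lra.
Qed.

Lemma quad_exprE (c1 c2 a1 a2 b1 b2 r1 r2 t1 t2 : R) :
  let t := t1 +i* t2 in
  c1 +i* c2 + t * (a1 +i* a2) + conjc t * (b1 +i* b2) + t * conjc t * (r1 +i* r2) =
  (c1 + (t1 * a1 - t2 * a2) + (t1 * b1 + t2 * b2) + (t1 * t1 + t2 * t2) * r1)
  +i* (c2 + (t1 * a2 + t2 * a1) + (t1 * b2 - t2 * b1) + (t1 * t1 + t2 * t2) * r2).
Proof. by rewrite /=; simpc; congr Complex; ring. Qed.

Lemma quad_ge0_cross_eq0 (c a al be : R[i]) : 0 <= c -> 0 <= a -> c * a = 0 ->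
  (forall t : R[i], 0 <= c + t * al + conjc t * be + t * conjc t * a) -> al = 0 /\ be = 0.
Proof.
case: c => c1 c2; case: a => r1 r2; case: al => a1 a2; case: be => b1 b2.
rewrite !lecE /= => /andP[/eqP c20 c10] /andP[/eqP r20 r10].
rewrite c20 r20; simpc => /eqP; rewrite eq_complex /= => /andP[/eqP cr0 _] hq.
have {}hq t1 t2 := hq (t1 +i* t2).
have hRe t1 t2 : 0 <= c1 + (t1 * a1 - t2 * a2) + (t1 * b1 + t2 * b2) + (t1 * t1 + t2 * t2) * r1.
  by have := hq t1 t2; rewrite quad_exprE lecE /= => /andP[_]; lra.
have hIm t1 t2 : t1 * a2 + t2 * a1 + (t1 * b2 - t2 * b1) = 0.
  by have := hq t1 t2; rewrite quad_exprE lecE /= => /andP[/eqP]; lra.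
have e1 := hIm 1 0; have e2 := hIm 0 1.
have bound (x : R) : (forall s, 0 < s -> s * x <= s * s * r1 + c1) -> x <= 0.
  exact: ler0_quad_bound r10 c10 cr0.
have X1 : a1 + b1 <= 0 by apply: bound => s s0; have := hRe (- s) 0; lra.
have X2 : - (a1 + b1) <= 0 by apply: bound => s s0; have := hRe s 0; lra.
have X3 : a2 - b2 <= 0 by apply: bound => s s0; have := hRe 0 s; lra.
have X4 : - (a2 - b2) <= 0 by apply: bound => s s0; have := hRe 0 (- s); lra.
by split; congr Complex; lra.
Qed.

End QuadraticInequality.

(** * Operators on a finite-dimensional Hilbert space *)

Section Operators.
Context (R : realType) (I : finType).
Local Notation C := R[i].
Local Notation opr := (opr R I).
Local Notation vect := (vect R I).
Local Notation zo := (zeroo R (I:=I)).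
Local Notation io := (ido R (I:=I)).
Implicit Types (A B D P Q : opr) (u v w : vect).

Lemma opr_ext A B : (forall x y, A x y = B x y) -> A = B.
Proof. by move=> eqAB; do 2![apply: functional_extensionality => ?]. Qed.

Lemma vect_ext u w : (forall x, u x = w x) -> u = w.
Proof. exact: functional_extensionality. Qed.

Definition vzero : vect := fun _ => 0.
Definition vadd u w : vect := fun x => u x + w x.
Definition vscale (t : C) u : vect := fun x => t * u x.
Definition ip u w : C := \sum_x conjc (u x) * w x.
Definition formo A u w : C := ip u (appo A w).
Definition herm A := forall x y, A x y = conjc (A y x).
Definition outer u w : opr := fun x y => u x * conjc (w y).
Definition ket (x : I) : vect := fun y => if y == x then 1 else 0.
Definition colo A (x : I) : vect := fun y => A y x.

Lemma formoE A v : formo A v v = \sum_x \sum_y conjc (v x) * A x y * v y.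
Proof.
rewrite /formo /ip /appo; apply: eq_bigr => x _.
by rewrite big_distrr /=; apply: eq_bigr => y _; rewrite mulrA.
Qed.

Lemma psdE A : psd A <-> herm A /\ forall v, 0 <= formo A v v.
Proof. by split=> -[hA posA]; split=> // v; [rewrite formoE | rewrite -formoE]; apply: posA. Qed.

Lemma psd_herm A : psd A -> herm A. Proof. by case. Qed.

Lemma hermE A : herm A <-> adjo A = A.
Proof.
split=> [hA|hA x y]; last by rewrite -{1}hA.
by apply: opr_ext => x y; rewrite /adjo hA conjcK.
Qed.

Lemma muloA A B D : A *o B *o D = A *o (B *o D).
Proof.
apply: opr_ext => x y; rewrite /mulo.
under eq_bigr do rewrite big_distrl /=.
rewrite exchange_big; apply: eq_bigr => z _.
by rewrite big_distrr /=; apply: eq_bigr => w _; rewrite mulrA.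
Qed.

Lemma appo_mulo A B v : appo (A *o B) v = appo A (appo B v).
Proof.
apply: vect_ext => x; rewrite /appo /mulo.
under eq_bigr do rewrite big_distrl /=.
rewrite exchange_big; apply: eq_bigr => z _.
by rewrite big_distrr /=; apply: eq_bigr => w _; rewrite mulrA.
Qed.

Lemma mulo_addl A B D : addo A B *o D = addo (A *o D) (B *o D).
Proof.
apply: opr_ext => x y; rewrite /mulo /addo -big_split.
by apply: eq_bigr => z _; rewrite mulrDl.
Qed.

Lemma mulo_addr A B D : A *o addo B D = addo (A *o B) (A *o D).
Proof.
apply: opr_ext => x y; rewrite /mulo /addo -big_split.
by apply: eq_bigr => z _; rewrite mulrDr.
Qed.

Lemma mulo_subl A B D : subo A B *o D = subo (A *o D) (B *o D).
Proof.
apply: opr_ext => x y; rewrite /mulo /subo -sumrB.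
by apply: eq_bigr => z _; rewrite mulrBl.
Qed.

Lemma mulo_subr A B D : A *o subo B D = subo (A *o B) (A *o D).
Proof.
apply: opr_ext => x y; rewrite /mulo /subo -sumrB.
by apply: eq_bigr => z _; rewrite mulrBr.
Qed.

Lemma mulo_scalel c A B : scaleo c A *o B = scaleo c (A *o B).
Proof.
apply: opr_ext => x y; rewrite /mulo /scaleo mulr_sumr.
by apply: eq_bigr => z _; rewrite mulrA.
Qed.

Lemma mulo_scaler c A B : A *o scaleo c B = scaleo c (A *o B).
Proof.
apply: opr_ext => x y; rewrite /mulo /scaleo mulr_sumr.
by apply: eq_bigr => z _; rewrite mulrCA.
Qed.

Lemma mul0o A : zo *o A = zo.
Proof. by apply: opr_ext => x y; rewrite /mulo big1 // => z _; rewrite mul0r. Qed.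

Lemma mulo0 A : A *o zo = zo.
Proof. by apply: opr_ext => x y; rewrite /mulo big1 // => z _; rewrite mulr0. Qed.

Lemma mul1o A : io *o A = A.
Proof.
apply: opr_ext => x y; rewrite /mulo /ido (bigD1 x) //= eqxx mul1r big1 ?addr0 //.
by move=> z; rewrite eq_sym => /negbTE ->; rewrite mul0r.
Qed.

Lemma mulo1 A : A *o io = A.
Proof.
apply: opr_ext => x y; rewrite /mulo /ido (bigD1 y) //= eqxx mulr1 big1 ?addr0 //.
by move=> z /negbTE ->; rewrite mulr0.
Qed.

Lemma adjoK A : adjo (adjo A) = A.
Proof. by apply: opr_ext => x y; rewrite /adjo conjcK. Qed.

Lemma adjo_mulo A B : adjo (A *o B) = adjo B *o adjo A.
Proof.
apply: opr_ext => x y; rewrite /adjo /mulo conjc_sum; apply: eq_bigr => z _.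
by rewrite conjcM mulrC.
Qed.

Lemma adjo_add A B : adjo (addo A B) = addo (adjo A) (adjo B).
Proof. by apply: opr_ext => x y; rewrite /adjo /addo conjcD. Qed.

Lemma adjo_sub A B : adjo (subo A B) = subo (adjo A) (adjo B).
Proof. by apply: opr_ext => x y; rewrite /adjo /subo conjcB. Qed.

Lemma adjo_scale c A : adjo (scaleo c A) = scaleo (conjc c) (adjo A).
Proof. by apply: opr_ext => x y; rewrite /adjo /scaleo conjcM. Qed.

Lemma adjo1 : adjo io = io.
Proof. by apply: opr_ext => x y; rewrite /adjo /ido eq_sym; case: eqP; rewrite ?conjc1 ?conjc0. Qed.

Lemma appo_vadd A u w : appo A (vadd u w) = vadd (appo A u) (appo A w).
Proof.
apply: vect_ext => x; rewrite /appo /vadd -big_split.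
by apply: eq_bigr => y _; rewrite mulrDr.
Qed.

Lemma appo_vscale A t u : appo A (vscale t u) = vscale t (appo A u).
Proof.
apply: vect_ext => x; rewrite /appo /vscale mulr_sumr.
by apply: eq_bigr => y _; rewrite mulrCA.
Qed.

Lemma appo_ket A y : appo A (ket y) = colo A y.
Proof.
apply: vect_ext => x; rewrite /appo /ket /colo (bigD1 y) //= eqxx mulr1 big1 ?addr0 //.
by move=> z /negbTE ->; rewrite mulr0.
Qed.

Lemma ip_vaddr u w1 w2 : ip u (vadd w1 w2) = ip u w1 + ip u w2.
Proof. by rewrite /ip -big_split; apply: eq_bigr => y _; rewrite mulrDr. Qed.

Lemma ip_vaddl u1 u2 w : ip (vadd u1 u2) w = ip u1 w + ip u2 w.
Proof. by rewrite /ip -big_split; apply: eq_bigr => y _; rewrite conjcD mulrDl. Qed.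

Lemma ip_vscaler u t w : ip u (vscale t w) = t * ip u w.
Proof. by rewrite /ip mulr_sumr; apply: eq_bigr => y _; rewrite mulrCA. Qed.

Lemma ip_vscalel t u w : ip (vscale t u) w = conjc t * ip u w.
Proof. by rewrite /ip mulr_sumr; apply: eq_bigr => y _; rewrite conjcM mulrA. Qed.

Lemma conj_ip u w : conjc (ip u w) = ip w u.
Proof. by rewrite /ip conjc_sum; apply: eq_bigr => x _; rewrite conjcM conjcK mulrC. Qed.

Lemma ip_ket x w : ip (ket x) w = w x.
Proof.
rewrite /ip /ket (bigD1 x) //= eqxx conjc1 mul1r big1 ?addr0 //.
by move=> z /negbTE ->; rewrite conjc0 mul0r.
Qed.

Lemma ip_adjo A u w : ip u (appo A w) = ip (appo (adjo A) u) w.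
Proof.
rewrite /ip /appo /adjo; under eq_bigr do rewrite big_distrr /=.
rewrite exchange_big; apply: eq_bigr => z _.
rewrite conjc_sum big_distrl /=; apply: eq_bigr => y _.
by rewrite conjcM conjcK mulrA [conjc (u y) * _]mulrC.
Qed.

Lemma ip_self_eq0 u : ip u u = 0 -> u = vzero.
Proof.
move=> /eqP; rewrite psumr_eq0 => [/allP u0|x _]; last by rewrite mulrC mulcJ_ge0.
apply: vect_ext => x; move: (u0 x (mem_index_enum x)).
by rewrite /= mulf_eq0 conjc_eq0 orbb => /eqP.
Qed.

Lemma formo_expand A u w t :
  formo A (vadd u (vscale t w)) (vadd u (vscale t w)) =
  formo A u u + t * formo A u w + conjc t * formo A w u + t * conjc t * formo A w w.
Proof.
rewrite /formo appo_vadd appo_vscale ip_vaddl !ip_vaddr !ip_vscalel !ip_vscaler.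
ring.
Qed.

Lemma formo_addo A B u : formo (addo A B) u u = formo A u u + formo B u u.
Proof.
rewrite /formo -ip_vaddr; congr ip; apply: vect_ext => x.
by rewrite /appo /vadd /addo -big_split; apply: eq_bigr => y _; rewrite mulrDl.
Qed.

Lemma formo_scaleo c A u : formo (scaleo c A) u u = c * formo A u u.
Proof.
rewrite /formo -ip_vscaler; congr ip; apply: vect_ext => x.
by rewrite /appo /vscale /scaleo mulr_sumr; apply: eq_bigr => y _; rewrite mulrA.
Qed.

Lemma formo0 u : formo zo u u = 0.
Proof.
rewrite /formo /ip big1 // => x _.
by rewrite /appo big1 ?mulr0 // => y _; rewrite mul0r.
Qed.

Lemma formo_sandw A D v :
  formo (A *o D *o adjo A) v v = formo D (appo (adjo A) v) (appo (adjo A) v).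
Proof. by rewrite /formo !appo_mulo ip_adjo. Qed.

Lemma psd_formo_eq0 A u : psd A -> formo A u u = 0 -> appo A u = vzero.
Proof.
move=> /psdE[_ posA] Au0; apply: vect_ext => x.
have [_ ] := @quad_ge0_cross_eq0 R _ _ (formo A u (ket x)) (formo A (ket x) u)
  (posA u) (posA (ket x)) ltac:(by rewrite Au0 mul0r)
  ltac:(by move=> t; rewrite -formo_expand).
by rewrite /formo ip_ket.
Qed.

Lemma formo_eq0 A : (forall u, formo A u u = 0) -> A = zo.
Proof.
move=> A0; apply: opr_ext => x y.
have [] := @quad_ge0_cross_eq0 R (formo A (ket x) (ket x)) (formo A (ket y) (ket y))
  (formo A (ket x) (ket y)) (formo A (ket y) (ket x))
  ltac:(by rewrite A0) ltac:(by rewrite A0) ltac:(by rewrite A0 mul0r)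
  ltac:(by move=> t; rewrite -formo_expand A0).
by rewrite /formo ip_ket appo_ket.
Qed.

Lemma psd0 : psd zo.
Proof. by apply/psdE; split=> [x y|v]; rewrite ?formo0 ?conjc0. Qed.

Lemma psd_add A B : psd A -> psd B -> psd (addo A B).
Proof.
move=> /psdE[hA posA] /psdE[hB posB]; apply/psdE; split=> [x y|v].
  by rewrite /addo conjcD -hA -hB.
by rewrite formo_addo addr_ge0.
Qed.

Lemma psd_scale c A : 0 <= c -> psd A -> psd (scaleo c A).
Proof.
move=> c0 /psdE[hA posA]; apply/psdE; split=> [x y|v]; last by rewrite formo_scaleo mulr_ge0.
have c_real : conjc c = c by case: c c0 => a b; rewrite lecE /= => /andP[/eqP-> _]; rewrite oppr0.
by rewrite /scaleo conjcM -hA c_real.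
Qed.

Lemma psd_sum (J : Type) (r : seq J) (f : J -> opr) :
  (forall j, psd (f j)) -> psd (fun x y => \sum_(j <- r) f j x y).
Proof.
move=> psd_f; elim: r => [|j r IHr].
  by rewrite (_ : (fun x y => _) = zo); [exact: psd0 | apply: opr_ext => x y; rewrite big_nil].
rewrite (_ : (fun x y => _) = addo (f j) (fun x y => \sum_(j <- r) f j x y)).
  exact: psd_add.
by apply: opr_ext => x y; rewrite big_cons.
Qed.

Lemma psd_sandw A D : psd D -> psd (A *o D *o adjo A).
Proof.
move=> /psdE[/hermE hD posD]; apply/psdE; split=> [|v]; last by rewrite formo_sandw.
by apply/hermE; rewrite !adjo_mulo adjoK hD muloA.
Qed.

Lemma appo_outer u w v : appo (outer u w) v = vscale (ip w v) u.
Proof.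
apply: vect_ext => x; rewrite /appo /outer /vscale /ip mulr_suml; apply: eq_bigr => y _.
by rewrite -mulrA mulrC.
Qed.

Lemma psd_outer u : psd (outer u u).
Proof.
apply/psdE; split=> [x y|v]; first by rewrite /outer conjcM conjcK mulrC.
by rewrite /formo appo_outer ip_vscaler -conj_ip mulrC mulcJ_ge0.
Qed.

Lemma trace_ge0 A : psd A -> 0 <= traceo A.
Proof.
move=> /psdE[_ posA]; rewrite /traceo sumr_ge0 // => x _.
by have := posA (ket x); rewrite /formo ip_ket appo_ket.
Qed.

End Operators.

Arguments ket {R I} x _.
Arguments vzero {R I} _.

(** * Projectors and subspaces *)

Section Projectors.
Context (R : realType) (I : finType).
Local Notation opr := (opr R I).
Local Notation vect := (vect R I).
Local Notation zo := (zeroo R (I:=I)).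
Implicit Types (A B D P Q W : opr) (u v w : vect).

Lemma appo_inj A B : (forall v, appo A v = appo B v) -> A = B.
Proof.
move=> AB; apply: opr_ext => x y.
by have := congr1 (fun f => f x) (AB (ket y)); rewrite !appo_ket.
Qed.

Lemma appo_zeroo v : appo zo v = vzero.
Proof. by apply: vect_ext => x; rewrite /appo big1 // => y _; rewrite mul0r. Qed.

Lemma appo_vzero A : appo A vzero = vzero.
Proof. by apply: vect_ext => x; rewrite /appo big1 // => y _; rewrite mulr0. Qed.

Lemma proj_herm P : projector P -> adjo P = P. Proof. by case. Qed.
Lemma proj_idem P : projector P -> P *o P = P. Proof. by case. Qed.

Lemma adjo0 : adjo zo = zo.
Proof. by apply: opr_ext => x y; rewrite /adjo conjc0. Qed.

Lemma orthcK P : orthc (orthc P) = P.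
Proof. by apply: opr_ext => x y; rewrite /orthc /subo opprB addrC subrK. Qed.

Lemma mulo_orthc P : projector P -> P *o orthc P = zo.
Proof. by move=> [PP _]; apply: opr_ext => x y; rewrite /orthc mulo_subr mulo1 PP /subo subrr. Qed.

Lemma projector_orthc P : projector P -> projector (orthc P).
Proof.
move=> [PP hP]; split; last by rewrite /orthc adjo_sub adjo1 hP.
rewrite /orthc mulo_subl !mulo_subr !mul1o !mulo1 PP.
by apply: opr_ext => x y; rewrite /subo subrr subr0.
Qed.

Lemma projector0 : projector zo.
Proof. by split; rewrite ?mul0o ?adjo0. Qed.

Lemma projector_addo P Q : projector P -> projector Q -> P *o Q = zo -> projector (addo P Q).
Proof.
move=> [PP hP] [QQ hQ] PQ0; have QP0 : Q *o P = zo by rewrite -hP -hQ -adjo_mulo PQ0 adjo0.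
split; last by rewrite adjo_add hP hQ.
rewrite mulo_addl !mulo_addr PP QQ PQ0 QP0.
by apply: opr_ext => x y; rewrite /addo addr0 add0r.
Qed.

Lemma mulo_models P D : P *o D = D -> models D P.
Proof. by move=> PD v; exists (appo D v); rewrite -appo_mulo PD. Qed.

Lemma models_mulo P D : projector P -> models D P -> P *o D = D.
Proof.
move=> [PP _] DP; apply: opr_ext => x y.
have [w Dw] := DP (ket y); rewrite appo_ket in Dw.
have -> : (P *o D) x y = appo (P *o D) (ket y) x by rewrite appo_ket.
by rewrite appo_mulo appo_ket Dw -appo_mulo PP -Dw.
Qed.

Lemma models_mulo_r P D : projector P -> herm D -> models D P -> D *o P = D.
Proof.
move=> hP /hermE hD DP; have := congr1 (@adjo R I) (models_mulo hP DP).
by rewrite adjo_mulo hD proj_herm.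
Qed.

Lemma models_compress P D : projector P -> psd D -> models D P -> P *o D *o P = D.
Proof. by move=> hP hD DP; rewrite (models_mulo hP DP) (models_mulo_r hP (psd_herm hD) DP). Qed.

Lemma compress_models P D : projector P -> models (P *o D *o P) P.
Proof. by move=> hP; apply: mulo_models; rewrite -!muloA proj_idem. Qed.

Lemma psd_compress P D : projector P -> psd D -> psd (P *o D *o P).
Proof. by move=> hP /(psd_sandw P); rewrite proj_herm. Qed.

Lemma models_scale c D P : models D P -> models (scaleo c D) P.
Proof.
move=> DP v; have [w Dw] := DP (vscale c v); exists w; rewrite -Dw appo_vscale.
apply: vect_ext => x; rewrite /appo /vscale /scaleo mulr_sumr.
by apply: eq_bigr => y _; rewrite mulrA.
Qed.

Lemma subsp_trans A B D : subsp A B -> subsp B D -> subsp A D.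
Proof. by move=> AB BD v; have [w ->] := AB v; exact: BD. Qed.

Lemma models0 P : models zo P.
Proof. by move=> v; exists vzero; rewrite appo_zeroo appo_vzero. Qed.

Lemma models_zero D : models D zo -> D = zo.
Proof. by move=> D0; rewrite -(models_mulo projector0 D0) mul0o. Qed.

Lemma models_outer P u w : appo P u = u -> models (outer u w) P.
Proof. by move=> Pu v; exists (vscale (ip w v) u); rewrite appo_outer appo_vscale Pu. Qed.

Lemma psd_models_orthc A W : psd A -> projector W ->
  (forall x, formo A (colo W x) (colo W x) = 0) -> models A (orthc W).
Proof.
move=> psdA hW AW0.
have AW : A *o W = zo.
  apply: opr_ext => a x; have := congr1 (fun f => f a) (psd_formo_eq0 psdA (AW0 x)).
  by rewrite /= /appo /mulo /colo.
have AWp : A *o orthc W = A.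
  by rewrite /orthc mulo_subr mulo1 AW; apply: opr_ext => x y; rewrite /subo subr0.
apply: mulo_models; have /hermE hA := psd_herm psdA.
by have := congr1 (@adjo R I) AWp; rewrite adjo_mulo hA proj_herm //; exact: projector_orthc.
Qed.

Definition subspace (X : vect -> Prop) :=
  [/\ X vzero, forall u w, X u -> X w -> X (vadd u w) & forall c u, X u -> X (vscale c u)].

Definition span (T : vect -> Prop) v :=
  forall Y, subspace Y -> (forall t, T t -> Y t) -> Y v.

Lemma subspace_span T : subspace (span T).
Proof.
split=> [Y [Y0 _ _] _ //|u w Tu Tw Y hY TY|c u Tu Y hY TY].
  by case: (hY) => _ YD _; apply: YD; [apply: Tu | apply: Tw].
by case: (hY) => _ _ YZ; apply: YZ; apply: Tu.
Qed.

Lemma subspace_fixpoints A : subspace (fun v => appo A v = v).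
Proof.
split=> [|u w Au Aw|c u Au]; first exact: appo_vzero.
  by rewrite appo_vadd Au Aw.
by rewrite appo_vscale Au.
Qed.

Lemma range_projector W v : projector W -> (exists w, v = appo W w) <-> appo W v = v.
Proof. by move=> [WW _]; split=> [[w ->]|Wv]; [rewrite -appo_mulo WW | exists v]. Qed.

Lemma range_addo P Q v : projector P -> projector Q -> P *o Q = zo ->
  appo (addo P Q) v = v <-> exists a b, [/\ appo P a = a, appo Q b = b & v = vadd a b].
Proof.
move=> [PP hP] [QQ hQ] PQ0; have QP0 : Q *o P = zo by rewrite -hP -hQ -adjo_mulo PQ0 adjo0.
have appo_addo v' : appo (addo P Q) v' = vadd (appo P v') (appo Q v').
  by apply: vect_ext => x; rewrite /appo /vadd -big_split; apply: eq_bigr => y _; rewrite mulrDl.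
split=> [PQv|[a [b [Pa Qb ->]]]].
  by exists (appo P v), (appo Q v); rewrite -!appo_mulo PP QQ -appo_addo PQv.
have Pb : appo P b = vzero by rewrite -Qb -appo_mulo PQ0 appo_zeroo.
have Qa : appo Q a = vzero by rewrite -Pa -appo_mulo QP0 appo_zeroo.
rewrite appo_addo !appo_vadd Pa Pb Qa Qb.
by apply: vect_ext => x; rewrite /vadd /vzero addr0 add0r.
Qed.

Definition lineo u : opr := scaleo (ip u u)^-1 (outer u u).

Lemma appo_lineo u v : appo (lineo u) v = vscale ((ip u u)^-1 * ip u v) u.
Proof.
apply: vect_ext => x; rewrite /appo /lineo /scaleo /outer /vscale /ip mulr_sumr mulr_suml.
by apply: eq_bigr => y _; ring.
Qed.

Lemma projector_lineo u : u <> vzero -> projector (lineo u).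
Proof.
move=> u0; have n0 : ip u u != 0 by apply/eqP => /ip_self_eq0.
split.
  by apply: appo_inj => v; rewrite appo_mulo !appo_lineo ip_vscaler; congr vscale; field.
by rewrite /lineo adjo_scale conjc_inv conj_ip; congr scaleo;
  apply: opr_ext => x y; rewrite /adjo /outer conjcM conjcK mulrC.
Qed.

Lemma range_lineo u v : u <> vzero -> appo (lineo u) v = v <-> exists c, v = vscale c u.
Proof.
move=> u0; have n0 : ip u u != 0 by apply/eqP => /ip_self_eq0.
rewrite appo_lineo; split=> [<-|[c ->]]; first by eexists.
by rewrite ip_vscaler; congr vscale; field.
Qed.

Lemma mulo_lineo W u : appo W u = vzero -> W *o lineo u = zo.
Proof.
move=> Wu0; apply: appo_inj => v.
rewrite appo_mulo appo_lineo appo_vscale Wu0 appo_zeroo.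
by apply: vect_ext => x; rewrite /vscale mulr0.
Qed.

Lemma projector_add_line W u : projector W -> appo W u = vzero -> u <> vzero ->
  projector (addo W (lineo u)) /\
  forall v, appo (addo W (lineo u)) v = v <-> exists c a, appo W a = a /\ v = vadd a (vscale c u).
Proof.
move=> hW Wu0 u0; have hL := projector_lineo u0; have WL := mulo_lineo Wu0.
split=> [|v]; first exact: projector_addo.
rewrite range_addo //; split=> [[a [b [Wa /(range_lineo _ u0) [c ->] ->]]]|[c [a [Wa ->]]]].
  by exists c, a.
by exists a, (vscale c u); split=> //; apply/range_lineo => //; exists c.
Qed.

(* Induction on the support: the vectors of X vanishing at d form the range of
   some W'; if some v0 in X has v0 d <> 0, then u := v0 - W' v0 is orthogonal
   to that range and W' + |u><u| / <u,u> projects onto X. *)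
Lemma subspace_projector_supp n (D : {set I}) (X : vect -> Prop) : #|D| = n -> subspace X ->
  (forall v, X v -> forall x, x \notin D -> v x = 0) ->
  exists W, projector W /\ forall v, appo W v = v <-> X v.
Proof.
elim: n D X => [|n IHn] D X cardD [X0 XD XZ] suppX.
  exists zo; split=> [|v]; first exact: projector0.
  rewrite appo_zeroo.
  split=> [<- //|Xv]; apply: vect_ext => x; apply/esym; apply: suppX => //.
  by move: cardD => /eqP; rewrite cards_eq0 => /eqP ->; rewrite inE.
have [d Dd] : exists d, d \in D by apply/set0Pn; rewrite -card_gt0 cardD.
pose X' v := X v /\ v d = 0.
have [W' [hW' rangeW']] : exists W', projector W' /\ forall v, appo W' v = v <-> X' v.
  apply: (IHn (D :\ d)); first by move: cardD; rewrite (cardsD1 d) Dd => -[].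
    split=> [|u w [Xu ud] [Xw wd]|c u [Xu ud]]; split; [by [] | by [] | exact: XD |
      by rewrite /vadd ud wd addr0 | exact: XZ | by rewrite /vscale ud mulr0].
  move=> v [Xv vd] x; rewrite !inE negb_and negbK => /orP[/eqP -> //|]; exact: suppX.
have X'X v : appo W' v = v -> X v by move=> /rangeW' [].
have [[v0 [Xv0 v0d]]|noX] := classic (exists v0, X v0 /\ v0 d <> 0); last first.
  exists W'; split=> // v; rewrite rangeW'; split=> [[] //|Xv]; split=> //.
  by apply: NNPP => vd; apply: noX; exists v.
pose u := vadd v0 (vscale (-1) (appo W' v0)).
have W'W'v0 : appo W' (appo W' v0) = appo W' v0 by rewrite -appo_mulo proj_idem.
have Xu : X u by apply: XD => //; apply: XZ; apply: X'X.
have ud : u d = v0 d.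
  by have [_ W0] := (rangeW' (appo W' v0)).1 W'W'v0; rewrite /u /vadd /vscale W0 mulr0 addr0.
have W'u0 : appo W' u = vzero.
  rewrite appo_vadd appo_vscale W'W'v0.
  by apply: vect_ext => x; rewrite /vadd /vscale /vzero mulN1r subrr.
have u0 : u <> vzero by move=> u0; apply: v0d; rewrite -ud u0.
have [hW rangeW] := projector_add_line hW' W'u0 u0.
exists (addo W' (lineo u)); split=> // v; rewrite rangeW.
split=> [[c [a [/X'X Xa ->]]]|Xv]; first by apply: XD => //; apply: XZ.
exists (v d / u d), (vadd v (vscale (- (v d / u d)) u)); split.
  apply/rangeW'; split; first by apply: XD => //; apply: XZ.
  by rewrite /vadd /vscale mulNr divfK ?subrr //; apply/eqP; rewrite ud.
by apply: vect_ext => x; rewrite /vadd /vscale; ring.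
Qed.

Lemma subspace_projector (X : vect -> Prop) : subspace X ->
  exists W, projector W /\ forall v, appo W v = v <-> X v.
Proof. by move=> hX; apply: (@subspace_projector_supp _ setT) => // v _ x; rewrite inE. Qed.

End Projectors.

Arguments projector0 {R I}.

(** * Positive maps and the semantics of programs *)

Section ComplexLimits.
Context (R : realType).
Local Notation C := R[i].
Implicit Types (u v : nat -> C) (l : C).

Lemma cvgCP u l : cvgC u l <->
  forall e : C, 0 < e -> exists N, forall n, (N <= n)%N -> `|u n - l| < e.
Proof.
split=> [ul e e0|ul e e0]; last by apply: ul; rewrite ltcR.
have [N uN] := ul (complex.Re e) ltac:(by move: e0; rewrite ltcE => /andP[]).
have -> : e = (complex.Re e)%:C by case: e e0 {uN} => a b; rewrite ltcE /= => /andP[/eqP-> _].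
by exists N.
Qed.

Lemma cvgC_unique u l1 l2 : cvgC u l1 -> cvgC u l2 -> l1 = l2.
Proof.
move=> /cvgCP ul1 /cvgCP ul2; apply/eqP/negPn/negP; rewrite -subr_eq0 -normr_gt0 => d0.
have e0 : 0 < `|l1 - l2| / 2%:R by rewrite divr_gt0.
have [N1 uN1] := ul1 _ e0; have [N2 uN2] := ul2 _ e0.
pose N := maxn N1 N2.
have tri : `|l1 - l2| <= `|u N - l1| + `|u N - l2|.
  have -> : l1 - l2 = (u N - l2) - (u N - l1) by ring.
  by rewrite [X in _ <= X]addrC ler_normB.
have := le_lt_trans tri (ltrD (uN1 _ (leq_maxl N1 N2)) (uN2 _ (leq_maxr N1 N2))).
by rewrite -splitr ltxx.
Qed.

Lemma cvgCD u v l1 l2 : cvgC u l1 -> cvgC v l2 -> cvgC (fun n => u n + v n) (l1 + l2).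
Proof.
move=> /cvgCP ul1 /cvgCP vl2; apply/cvgCP => e e0.
have e20 : 0 < e / 2%:R by rewrite divr_gt0.
have [N1 uN1] := ul1 _ e20; have [N2 vN2] := vl2 _ e20.
exists (maxn N1 N2) => n; rewrite geq_max => /andP[n1 n2].
have -> : u n + v n - (l1 + l2) = (u n - l1) + (v n - l2) by ring.
by rewrite (splitr e) (le_lt_trans (ler_normD _ _) (ltrD (uN1 _ n1) (vN2 _ n2))).
Qed.

Lemma cvgCZ c u l : cvgC u l -> cvgC (fun n => c * u n) (c * l).
Proof.
move=> /cvgCP ul; apply/cvgCP => e e0.
have c1 : 0 < `|c| + 1 by rewrite ltr_wpDl.
have [N uN] := ul _ (divr_gt0 e0 c1).
exists N => n /uN ulN; rewrite -mulrBr normrM.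
rewrite (le_lt_trans (ler_wpM2l (normr_ge0 c) (ltW ulN))) // mulrA ltr_pdivrMr //.
by rewrite [X in X < _]mulrC ltr_pM2l // ltrDl.
Qed.

Lemma cvgCJ u l : cvgC u l -> cvgC (fun n => conjc (u n)) (conjc l).
Proof.
move=> /cvgCP ul; apply/cvgCP => e /ul[N uN].
by exists N => n /uN; rewrite -conjcB normcJ.
Qed.

Lemma cvgC_sum (J : Type) (s : seq J) (f : J -> nat -> C) (L : J -> C) :
  (forall j, cvgC (f j) (L j)) -> cvgC (fun n => \sum_(j <- s) f j n) (\sum_(j <- s) L j).
Proof.
move=> fL; elim: s => [|j s IHs].
  rewrite big_nil; apply/cvgCP => e e0; exists 0%N => n _.
  by rewrite big_nil subrr normr0.
rewrite big_cons (_ : (fun n => _) = fun n => f j n + \sum_(j <- s) f j n).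
  exact: cvgCD.
by apply: functional_extensionality => n; rewrite big_cons.
Qed.

Lemma complex_ReB (z w : C) : complex.Re (z - w) = complex.Re z - complex.Re w.
Proof. by case: z w => ? ? [? ?]. Qed.

Lemma complex_ImB (z w : C) : complex.Im (z - w) = complex.Im z - complex.Im w.
Proof. by case: z w => ? ? [? ?]. Qed.

Lemma normc_ge_Im (z : C) : `|complex.Im z|%:C <= `|z|.
Proof. by rewrite normc_def lecR -sqrtr_sqr ler_wsqrtr // lerDr sqr_ge0. Qed.

Lemma cvgC_ge0 u l : (forall n, 0 <= u n) -> cvgC u l -> 0 <= l.
Proof.
move=> u_ge0 /cvgCP ul.
have Im_l : complex.Im l = 0.
  apply/eqP/negPn/negP => Il0.
  have [N uN] := ul `|complex.Im l|%:C ltac:(by rewrite ltcR normr_gt0).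
  have := le_lt_trans (normc_ge_Im _) (uN N (leqnn N)).
  by rewrite ltcR complex_ImB (ger0_Im (u_ge0 N)) sub0r normrN ltxx.
rewrite lecE Im_l eqxx leNgt /=; apply/negP => Rl0.
have [N uN] := ul (- complex.Re l)%:C ltac:(by rewrite ltcR oppr_gt0).
have := le_lt_trans (normc_ge_Re _) (uN N (leqnn N)); rewrite ltcR complex_ReB.
have := u_ge0 N; rewrite lecE => /andP[_ /= ReuN].
move=> /(le_lt_trans (ler_norm _)); lra.
Qed.

End ComplexLimits.

Section PositiveMaps.
Context (R : realType) (I : finType).
Local Notation opr := (opr R I).
Local Notation superop := (superop R I).
Local Notation zo := (zeroo R (I:=I)).
Implicit Types (A B D X : opr) (E F : superop).

Section Linear.
Variable E : superop.
Hypothesis linE : linear_so E.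

Lemma lin0 : E zo = zo.
Proof.
have := linE 1 zo zo.
rewrite (_ : addo _ _ = zo); last by apply: opr_ext => x y; rewrite /addo /scaleo mulr0 addr0.
move=> E0; apply: opr_ext => x y; have := congr1 (fun f => f x y) E0.
by rewrite /addo /scaleo mul1r -{1}[E zo x y]addr0 => /addrI <-.
Qed.

Lemma linD A B : E (addo A B) = addo (E A) (E B).
Proof.
have scale1 D : scaleo 1 D = D by apply: opr_ext => x y; rewrite /scaleo mul1r.
by rewrite -{1}(scale1 A) linE scale1.
Qed.

Lemma linZ c A : E (scaleo c A) = scaleo c (E A).
Proof.
have add0 D : addo D zo = D by apply: opr_ext => x y; rewrite /addo /zeroo addr0.
by rewrite -(add0 (scaleo c A)) linE lin0 add0.
Qed.

Lemma lin_sum (J : Type) (s : seq J) (f : J -> opr) :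
  E (fun x y => \sum_(j <- s) f j x y) = fun x y => \sum_(j <- s) E (f j) x y.
Proof.
elim: s => [|j s IHs].
  rewrite (_ : (fun x y => _) = zo) ?lin0; last by apply: opr_ext => x y; rewrite big_nil.
  by apply: opr_ext => x y; rewrite big_nil.
rewrite (_ : (fun x y => _) = addo (f j) (fun x y => \sum_(j <- s) f j x y)).
  by rewrite linD IHs; apply: opr_ext => x y; rewrite /addo big_cons.
by apply: opr_ext => x y; rewrite big_cons.
Qed.

Lemma lin_unito_expand M :
  E M = fun p q => \sum_x \sum_y M x y * E (unito R x y) p q.
Proof.
have eM : M = fun p q => \sum_x (fun p q => \sum_y scaleo (M x y) (unito R x y) p q) p q.
  apply: opr_ext => p q; rewrite /scaleo /unito.
  rewrite (bigD1 p) //= [X in _ + X]big1 => [|x px]; last first.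
    by rewrite big1 // => y _; rewrite eq_sym (negbTE px) mulr0.
  rewrite (bigD1 q) //= big1 => [|y qy]; last by rewrite eqxx eq_sym (negbTE qy) mulr0.
  by rewrite !eqxx mulr1 !addr0.
rewrite {1}eM lin_sum; apply: opr_ext => p q; apply: eq_bigr => x _.
by rewrite lin_sum; apply: eq_bigr => y _; rewrite linZ.
Qed.

End Linear.

Definition posmap E := linear_so E /\ forall rho, psd rho -> psd (E rho).

Lemma posmap_id : posmap id.
Proof. by []. Qed.

Lemma posmap0 : posmap (fun _ => zo).
Proof.
split=> [a A B|rho _]; last exact: psd0.
by apply: opr_ext => x y; rewrite /addo /scaleo /zeroo mulr0 addr0.
Qed.

Lemma posmap_sandw X : posmap (fun rho => X *o rho *o adjo X).
Proof.
split=> [a A B|rho]; last exact: psd_sandw.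
by rewrite mulo_addr mulo_addl mulo_scaler mulo_scalel.
Qed.

Lemma posmap_compress X : adjo X = X -> posmap (fun rho => X *o rho *o X).
Proof. by move=> hX; have := posmap_sandw X; rewrite hX. Qed.

Lemma posmap_comp E F : posmap E -> posmap F -> posmap (fun rho => F (E rho)).
Proof.
move=> [linE posE] [linF posF]; split=> [a A B|rho /posE /posF //].
by rewrite linE linF.
Qed.

Lemma posmap_add E F : posmap E -> posmap F -> posmap (fun rho => addo (E rho) (F rho)).
Proof.
move=> [linE posE] [linF posF]; split=> [a A B|rho psd_rho]; last by apply: psd_add; auto.
by rewrite linE linF; apply: opr_ext => x y; rewrite /addo /scaleo; ring.
Qed.

Lemma posmap_scale c E : 0 <= c -> posmap E -> posmap (fun rho => scaleo c (E rho)).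
Proof.
move=> c0 [linE posE]; split=> [a A B|rho psd_rho]; last by apply: psd_scale; auto.
by rewrite linE; apply: opr_ext => x y; rewrite /addo /scaleo; ring.
Qed.

Lemma posmap_sum (J : Type) (s : seq J) (f : J -> superop) :
  (forall j, posmap (f j)) -> posmap (fun rho x y => \sum_(j <- s) f j rho x y).
Proof.
move=> posf; split=> [a A B|rho psd_rho]; last by apply: psd_sum => j; apply: (posf j).2.
apply: opr_ext => x y; rewrite /addo /scaleo mulr_sumr -big_split; apply: eq_bigr => j _.
by rewrite (posf j).1.
Qed.

Lemma posmap_lim (U : nat -> superop) E : (forall n, posmap (U n)) ->
  (forall rho, cvg_op (fun n => U n rho) (E rho)) -> posmap E.
Proof.
move=> posU UE; split=> [a A B|rho psd_rho].
  apply: opr_ext => x y; apply: (cvgC_unique (UE _ x y)).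
  rewrite (_ : (fun n => _) = fun n => a * U n A x y + U n B x y).
    exact: cvgCD (cvgCZ a (UE A x y)) (UE B x y).
  by apply: functional_extensionality => n; rewrite (posU n).1.
have psd_U n := (posU n).2 rho psd_rho.
apply/psdE; split=> [x y|v].
  apply: (cvgC_unique (UE _ x y)).
  rewrite (_ : (fun n => _) = fun n => conjc (U n rho y x)); first exact: cvgCJ (UE rho y x).
  by apply: functional_extensionality => n; rewrite (psd_herm (psd_U n)).
apply: (@cvgC_ge0 _ (fun n => formo (U n rho) v v)) => [n|].
  by have /psdE[_] := psd_U n; apply.
rewrite formoE (_ : (fun n => _) = fun n =>
  \sum_x \sum_y (conjc (v x) * v y) * U n rho x y).
  apply: cvgC_sum => x; apply: cvgC_sum => y.
  by rewrite mulrAC; apply: cvgCZ (UE rho x y).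
apply: functional_extensionality => n; rewrite formoE.
by apply: eq_bigr => x _; apply: eq_bigr => y _; ring.
Qed.

End PositiveMaps.

Section Reindexing.
Context (R : realType) (I J : finType) (phi : I -> J).
Local Notation C := R[i].

Definition pushop (rho : opr R I) : opr R J :=
  fun i j => \sum_(x | phi x == i) \sum_(y | phi y == j) rho x y.
Definition pullop (tau : opr R J) : opr R I := fun x y => tau (phi x) (phi y).

Lemma sum_fibers2 (F : I -> I -> J -> J -> C) :
  \sum_x \sum_y F x y (phi x) (phi y) =
  \sum_i \sum_j \sum_(x | phi x == i) \sum_(y | phi y == j) F x y i j.
Proof.
rewrite (partition_big phi predT) //; apply: eq_bigr => i _.
under eq_bigr => x /eqP phix do rewrite (partition_big phi predT) // phix.
rewrite exchange_big; apply: eq_bigr => j _; apply: eq_bigr => x _.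
by apply: eq_bigr => y /eqP ->.
Qed.

Lemma sum_pushop (rho : opr R I) (f : J -> J -> C) :
  \sum_i \sum_j pushop rho i j * f i j = \sum_x \sum_y rho x y * f (phi x) (phi y).
Proof.
rewrite (sum_fibers2 (fun x y i j => rho x y * f i j)); apply: eq_bigr => i _.
by apply: eq_bigr => j _; rewrite big_distrl; apply: eq_bigr => x _; rewrite big_distrl.
Qed.

Lemma sum_if_eq (K : finType) (k0 : K) (h : K -> C) :
  \sum_k (if k == k0 then h k else 0) = h k0.
Proof. by rewrite -big_mkcond big_pred1_eq. Qed.

Lemma sum_pair (K L : finType) (g : K * L -> C) : \sum_p g p = \sum_k \sum_l g (k, l).
Proof. by rewrite pair_bigA; apply: eq_bigr => -[]. Qed.

Lemma psd_pullop tau : psd tau -> psd (pullop tau).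
Proof.
move=> /psdE[htau pos_tau]; apply/psdE; split=> [x y|v]; first exact: htau.
pose w j := \sum_(x | phi x == j) v x.
rewrite (_ : formo _ v v = formo tau w w) //.
rewrite !formoE /pullop (sum_fibers2 (fun x y i j => conjc (v x) * tau i j * v y)).
apply: eq_bigr => i _; apply: eq_bigr => j _.
rewrite /w conjc_sum !big_distrl; apply: eq_bigr => x _.
by rewrite big_distrr.
Qed.

Lemma psd_pushop rho : psd rho -> psd (pushop rho).
Proof.
move=> /psdE[hrho pos_rho]; apply/psdE; split=> [i j|w].
  rewrite /pushop conjc_sum exchange_big; apply: eq_bigr => y _.
  by rewrite conjc_sum; apply: eq_bigr => x _; rewrite hrho.
rewrite (_ : formo _ w w = formo rho (fun x => w (phi x)) (fun x => w (phi x))) //.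
rewrite !formoE (sum_fibers2 (fun x y i j => conjc (w i) * rho x y * w j)).
apply: eq_bigr => i _; apply: eq_bigr => j _.
rewrite /pushop big_distrr big_distrl; apply: eq_bigr => x _.
by rewrite big_distrr big_distrl.
Qed.

End Reindexing.

Section Extension.
Context (R : realType) (V : finType).
Local Notation B := (basis V).
Local Notation opr := (opr R B).

Lemma agree_outC (r : seq V) x y : agree_out r x y = agree_out r y x.
Proof. by apply: eq_forallb => v; rewrite eq_sym. Qed.

Lemma adjo_ext (r : seq V) (A : Defs.opr R (lbasis r)) : adjo (ext A) = ext (adjo A).
Proof.
apply: opr_ext => x y; rewrite /adjo /ext agree_outC.
by case: agree_out; rewrite ?conjc0.
Qed.

Lemma adjo_unito (K : finType) (a b : K) : adjo (unito R a b) = unito R b a.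
Proof.
apply: opr_ext => x y; rewrite /adjo /unito andbC.
by case: (_ && _); rewrite ?conjc1 ?conjc0.
Qed.

Lemma restrict_enum_inj : injective (@restrict V (enum V)).
Proof.
move=> a b eq_ab; apply/ffunP => v.
have v_lt : (index v (enum V) < size (enum V))%N by rewrite index_mem mem_enum.
have := congr1 (fun f : lbasis (enum V) => f (Ordinal v_lt)) eq_ab; rewrite !ffunE.
by rewrite (tnth_nth v) /= nth_index ?mem_enum.
Qed.

Lemma ext_loc (P : opr) : ext (loc P) = P.
Proof.
apply: opr_ext => x y; rewrite /ext /loc.
have -> : agree_out (enum V) x y by apply/forallP => v; rewrite mem_enum.
transitivity (\sum_a (if a == x then \sum_b (if b == y then P a b else 0) else 0)).
  apply: eq_bigr => a _; rewrite (inj_eq restrict_enum_inj); case: (a == x); last by rewrite big1.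
  by apply: eq_bigr => b _; rewrite (inj_eq restrict_enum_inj).
by rewrite !sum_if_eq.
Qed.

(* The basis state a of H_V is encoded as the pair (restrict r a, k), where the
   ancilla index k enumerates a with its r-qubits cleared; the extension of F
   by the identity is then pulled back from F (x) id on that ancilla. *)
Definition clear (r : seq V) (a : B) : B := [ffun v => if v \in r then false else a v].
Definition split_basis (r : seq V) (a : B) : (lbasis r * 'I_#|B|)%type :=
  (restrict r a, enum_rank (clear r a)).

Lemma agree_outE (r : seq V) a x : agree_out r a x = (clear r x == clear r a).
Proof.
apply/forallP/eqP => [agree_ax|/ffunP clear_xa v].
  apply/ffunP => v; rewrite !ffunE; case: ifP => // /negbT vr.
  by have /implyP/(_ vr)/eqP := agree_ax v.
by apply/implyP => vr; have := clear_xa v; rewrite !ffunE (negbTE vr) => ->.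
Qed.

Lemma linear_ext_so (r : seq V) (F : superop R (lbasis r)) : linear_so (ext_so F).
Proof.
move=> c A D; apply: opr_ext => a b; rewrite /ext_so /addo /scaleo mulr_sumr -big_split /=.
by apply: eq_bigr => x _; rewrite mulr_sumr -big_split /=; apply: eq_bigr => y _; ring.
Qed.

Lemma ext_so_pullop (r : seq V) (F : superop R (lbasis r)) rho : linear_so F ->
  ext_so F rho = pullop (split_basis r) (ampl F (pushop (split_basis r) rho)).
Proof.
move=> linF; apply: opr_ext => a b; rewrite /pullop /ampl /= (lin_unito_expand linF).
set G := fun x y => F (unito R x y) (restrict r a) (restrict r b).
set ka := enum_rank (clear r a); set kb := enum_rank (clear r b).
pose f (i j : (lbasis r * 'I_#|B|)%type) := if (i.2 == ka) && (j.2 == kb) then G i.1 j.1 else 0.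
transitivity (\sum_i \sum_j pushop (split_basis r) rho i j * f i j); last first.
  rewrite sum_pair; apply: eq_bigr => x _.
  rewrite -(sum_if_eq ka (fun k => \sum_y pushop (split_basis r) rho (x, k) (y, kb) * G x y)).
  apply: eq_bigr => k _; case: (eqVneq k ka) => [->|kka]; last first.
    by rewrite big1 // => j _; rewrite /f /= (negbTE kka) mulr0.
  rewrite sum_pair; apply: eq_bigr => y _.
  rewrite -(sum_if_eq kb (fun l => pushop (split_basis r) rho (x, ka) (y, l) * G x y)).
  apply: eq_bigr => l _.
  by case: (eqVneq l kb) => [->|lkb]; rewrite /f /= ?eqxx ?(negbTE lkb) ?mulr0.
rewrite sum_pushop /ext_so; apply: eq_bigr => x _; apply: eq_bigr => y _.
by rewrite /f /= !(inj_eq enum_rank_inj) -!agree_outE.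
Qed.

Lemma posmap_ext_so (r : seq V) (F : superop R (lbasis r)) : cptn F -> posmap (ext_so F).
Proof.
case=> linF cpF _; split=> [|rho psd_rho]; first exact: linear_ext_so.
by rewrite ext_so_pullop //; apply/psd_pullop/cpF/psd_pushop.
Qed.

End Extension.

Section SemanticsPositive.
Context (R : realType) (V : finType).
Local Notation B := (basis V).
Local Notation opr := (opr R B).

Lemma adjo_ext_proj (r : seq V) (P : Defs.opr R (lbasis r)) : projector P -> adjo (ext P) = ext P.
Proof. by move=> hP; rewrite adjo_ext proj_herm. Qed.

Lemma adjo_orthc (A : opr) : adjo (orthc A) = orthc (adjo A).
Proof. by rewrite /orthc adjo_sub adjo1. Qed.

Lemma posmap_init (r : seq V) (E : superop R B) : sem (@Init R V r) E -> posmap E.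
Proof.
move=> ->; set z := [ffun _ => false].
rewrite (_ : (fun rho => _) = fun rho a b =>
    \sum_(i : lbasis r) (ext (unito R z i) *o rho *o adjo (ext (unito R z i))) a b).
  by apply: posmap_sum => i; apply: posmap_sandw.
do 3!apply: functional_extensionality => ?; apply: eq_bigr => i _.
by rewrite adjo_ext adjo_unito.
Qed.

Lemma sem_posmap (S : prog R V) : wf S -> forall E, sem S E -> posmap E.
Proof.
elim: S => [||r|r U|r P|r P Q|p S0 IH0 S1 IH1|S0 IH0 S1 IH1|r P S1 IH1 S0 IH0|r P Sb IH] /=.
- by move=> _ E ->; exact: posmap_id.
- by move=> _ E ->; exact: posmap0.
- by move=> _; exact: posmap_init.
- by move=> _ E ->; exact: posmap_sandw.
- by move=> [_ hP] E ->; apply/posmap_compress/adjo_ext_proj.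
- by move=> _ E [F [cpF _ ->]]; exact: posmap_ext_so.
- move=> [/andP[p0 p1] wf0 wf1] E [E0 [E1 [sem0 sem1 ->]]].
  by apply: posmap_add; apply: posmap_scale; rewrite ?ler0c ?subr_ge0 //; auto.
- by move=> [wf0 wf1] E [E0 [E1 [sem0 sem1 ->]]]; apply: posmap_comp; auto.
- move=> [_ hP wf1 wf0] E [E1 [E0 [sem1 sem0 ->]]].
  by apply: posmap_add; apply: posmap_comp; auto; apply: posmap_compress;
    rewrite ?adjo_orthc adjo_ext_proj.
move=> [_ hP wfb] E [Es [semEs lim_E]].
have posP : posmap (fun rho => ext P *o rho *o ext P) by apply/posmap_compress/adjo_ext_proj.
have posPp : posmap (fun rho => orthc (ext P) *o rho *o orthc (ext P)).
  by apply: posmap_compress; rewrite adjo_orthc adjo_ext_proj.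
have pos_iter k : posmap (loop_body (fun rho => ext P *o rho *o ext P) Es k).
  by elim: k => [|k IHk] //=; apply: posmap_comp (IH wfb _ (semEs k)); apply: posmap_comp posP.
apply: posmap_lim lim_E => n; apply: posmap_sum => k.
exact: posmap_comp (pos_iter k) posPp.
Qed.

End SemanticsPositive.

(** * Redundant assertions *)

Section CrossTerms.
Context (R : realType) (I : finType).
Local Notation opr := (opr R I).
Local Notation zo := (zeroo R (I:=I)).
Implicit Types (A X Y rho : opr) (F : superop R I).

Lemma expand_sandw X Y rho t :
  (addo X (scaleo t Y)) *o rho *o adjo (addo X (scaleo t Y)) =
  addo (addo (X *o rho *o adjo X) (scaleo (conjc t) (X *o rho *o adjo Y)))
       (addo (scaleo t (Y *o rho *o adjo X)) (scaleo (t * conjc t) (Y *o rho *o adjo Y))).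
Proof.
rewrite adjo_add adjo_scale !mulo_addl !mulo_addr !mulo_scalel !mulo_scaler.
by apply: opr_ext => x y; rewrite /addo /scaleo; ring.
Qed.

(* Positivity on (X + tY) rho (X + tY)^* for all t: the quadratic form in t
   has no |t|^2 term, so its linear terms vanish. *)
Lemma posmap_cross_eq0 F X Y rho : posmap F -> psd rho -> F (Y *o rho *o adjo Y) = zo ->
  F (X *o rho *o adjo Y) = zo /\ F (Y *o rho *o adjo X) = zo.
Proof.
move=> [linF posF] psd_rho FY0.
have cross u : formo (F (Y *o rho *o adjo X)) u u = 0 /\ formo (F (X *o rho *o adjo Y)) u u = 0.
  pose h A := formo (F A) u u.
  have h_ge0 A : psd A -> 0 <= h A by move=> /posF /psdE[_]; apply.
  apply: (@quad_ge0_cross_eq0 _ (h (X *o rho *o adjo X)) 0).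
  - exact/h_ge0/psd_sandw.
  - exact: lexx.
  - exact: mulr0.
  - move=> t; have := h_ge0 _ (psd_sandw (addo X (scaleo t Y)) psd_rho).
    rewrite expand_sandw /h !(linD linF) !(linZ linF) FY0 !formo_addo !formo_scaleo formo0.
    by rewrite addrACA addrA.
by split; apply: formo_eq0 => u; case: (cross u).
Qed.

End CrossTerms.

Section AssertionEquivalences.
Context (R : realType) (V : finType).
Local Notation B := (basis V).
Local Notation opr := (opr R B).
Implicit Types (P Q rho : opr) (S : prog R V).

Lemma hoare_psd P S Q E rho : hoare P S Q -> wf S -> sem S E -> psd rho -> models rho P ->
  models (E rho) Q.
Proof.
move=> PSQ wfS semE psd_rho rhoP; have [linE _] := sem_posmap wfS semE.
(* The triple only speaks of partial density operators: rescale rho. *)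
have t_gt0 : 0 < 1 + traceo rho by rewrite ltr_pwDl ?trace_ge0.
pose c := (1 + traceo rho)^-1.
have pdo_c : pdo (scaleo c rho).
  split; first by apply: psd_scale => //; rewrite invr_ge0 ltW.
  rewrite /traceo /scaleo -mulr_sumr -/(traceo rho) /c mulrC ler_pdivrMr // mul1r.
  by rewrite lerDr.
have := PSQ _ _ pdo_c semE (models_scale c rhoP); rewrite (linZ linE) => /(models_scale c^-1).
rewrite (_ : scaleo _ _ = E rho) //; apply: opr_ext => x y.
by rewrite /scaleo mulrA mulVf ?mul1r // invr_eq0 gt_eqF.
Qed.

Lemma equiv_of_sem_eq S1 S2 :
  (forall E1, sem S1 E1 -> exists2 E2, sem S2 E2 & forall rho, pdo rho -> E1 rho = E2 rho) ->
  (forall E2, sem S2 E2 -> exists2 E1, sem S1 E1 & forall rho, pdo rho -> E2 rho = E1 rho) ->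
  prog_equiv S1 S2.
Proof.
move=> sem12 sem21; split=> P Q _ _ PSQ rho E pdo_rho semE rhoP.
  by have [E1 semE1 ->] := sem21 E semE; [exact: PSQ semE1 rhoP | ].
by have [E2 semE2 ->] := sem12 E semE; [exact: PSQ semE2 rhoP | ].
Qed.

Lemma sem_assertV P : sem (assertV P) (fun rho => P *o rho *o P).
Proof. by rewrite /= ext_loc. Qed.

Lemma sem_assert_seq P S E : sem S E -> sem (Seq (assertV P) S) (fun rho => E (P *o rho *o P)).
Proof. by exists (fun rho => P *o rho *o P), E; split=> //; exact: sem_assertV. Qed.

Lemma sem_seq_assert Q S E : sem S E -> sem (Seq S (assertV Q)) (fun rho => Q *o E rho *o Q).
Proof. by exists E, (fun rho => Q *o rho *o Q); split=> //; exact: sem_assertV. Qed.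

Lemma sem_assertVE P E : sem (assertV P) E -> E = fun rho => P *o rho *o P.
Proof. by rewrite /= ext_loc. Qed.

Lemma hoare_compress P Q S E rho : projector P -> projector Q -> hoare P S Q -> wf S ->
  sem S E -> psd rho -> Q *o E (P *o rho *o P) *o Q = E (P *o rho *o P).
Proof.
move=> hP hQ PSQ wfS semE psd_rho; have [_ posE] := sem_posmap wfS semE.
apply: models_compress => //; first exact/posE/psd_compress.
by apply: (hoare_psd PSQ wfS semE); [exact: psd_compress | exact: compress_models].
Qed.

Lemma assert_post_redundantP P Q S : projector P -> projector Q -> wf S ->
  prog_equiv (Seq (assertV P) S) (Seq (Seq (assertV P) S) (assertV Q)) <-> hoare P S Q.
Proof.
move=> hP hQ wfS; split=> [[_ refine21] rho E pdo_rho semE rhoP|PSQ].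
  (* [{P} {P};S;{Q} {Q}] holds trivially, and transfers to [{P};S]. *)
  have PSQ_Q : hoare P (Seq (Seq (assertV P) S) (assertV Q)) Q.
    move=> ? ? _ [? [? [_ /sem_assertVE -> ->]]] _.
    exact: compress_models.
  have := refine21 P Q hP hQ PSQ_Q rho _ pdo_rho (sem_assert_seq P semE) rhoP.
  by rewrite /= models_compress //; case: pdo_rho.
apply: equiv_of_sem_eq => [_ [E0 [E [/sem_assertVE -> semE ->]]]|].
  exists (fun rho => Q *o E (P *o rho *o P) *o Q) => [|rho [psd_rho _]].
    exact/sem_seq_assert/sem_assert_seq.
  by rewrite (hoare_compress hP hQ PSQ wfS semE psd_rho).
move=> _ [E01 [EQ [[EP [E [/sem_assertVE -> semE ->]]] /sem_assertVE -> ->]]].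
exists (fun rho => E (P *o rho *o P)) => [|rho [psd_rho _]]; first exact: sem_assert_seq.
exact: hoare_compress hP hQ PSQ wfS semE psd_rho.
Qed.

End AssertionEquivalences.

Section PreconditionRedundant.
Context (R : realType) (V : finType).
Local Notation B := (basis V).
Local Notation opr := (opr R B).
Local Notation zo := (zeroo R (I:=B)).
Implicit Types (P Q rho : opr) (S : prog R V).

Lemma lin_decompose_proj (F : superop R B) P rho : linear_so F -> F rho =
  addo (addo (F (P *o rho *o P)) (F (P *o rho *o orthc P)))
       (addo (F (orthc P *o rho *o P)) (F (orthc P *o rho *o orthc P))).
Proof.
have P_Pp : addo P (orthc P) = ido R (I:=B).
  by apply: opr_ext => x y; rewrite /addo /orthc /subo addrC subrK.
move=> linF; rewrite -!(linD linF) -!mulo_addr -!mulo_addl.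
by rewrite P_Pp mul1o mulo1.
Qed.

Lemma hoare_orthc_compress P Q S E rho : projector P -> projector Q ->
  hoare (orthc P) S (orthc Q) -> wf S -> sem S E -> psd rho ->
  Q *o E rho *o Q = Q *o E (P *o rho *o P) *o Q.
Proof.
move=> hP hQ PSQ wfS semE psd_rho; have posE := sem_posmap wfS semE.
have hPp := projector_orthc hP; set Pp := orthc P in hPp *.
have posF : posmap (fun X => Q *o E X *o Q).
  exact: posmap_comp posE (posmap_compress (proj_herm hQ)).
have F_PpPp : Q *o E (Pp *o rho *o Pp) *o Q = zo.
  have := hoare_psd PSQ wfS semE (psd_compress hPp psd_rho) (compress_models _ hPp).
  move=> /(models_mulo (projector_orthc hQ)) <-.
  by rewrite -muloA mulo_orthc // !mul0o.
have [] := posmap_cross_eq0 P (Y := Pp) posF psd_rho ltac:(by rewrite /= proj_herm).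
rewrite /= !proj_herm // => F_PPp F_PpP.
have := lin_decompose_proj P rho posF.1; rewrite /= -/Pp F_PPp F_PpP F_PpPp => ->.
by apply: opr_ext => x y; rewrite /addo /zeroo !addr0.
Qed.

Lemma assert_pre_redundantP P Q S : projector P -> projector Q -> wf S ->
  prog_equiv (Seq S (assertV Q)) (Seq (Seq (assertV P) S) (assertV Q)) <->
  hoare (orthc P) S (orthc Q).
Proof.
move=> hP hQ wfS; split=> [[_ refine21] rho E pdo_rho semE rhoPp|PSQ].
  (* [{orthc P} {P};S;{Q} {0}] holds trivially, and transfers to [S;{Q}]. *)
  have PSQ_0 : hoare (orthc P) (Seq (Seq (assertV P) S) (assertV Q)) zo.
    move=> rho' _ _ [_ [_ [[_ [E' [/sem_assertVE -> semE' ->]]] /sem_assertVE -> ->]]] rho'Pp /=.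
    have -> : P *o rho' *o P = zo.
      by rewrite -(models_mulo (projector_orthc hP) rho'Pp) -muloA mulo_orthc // !mul0o.
    by rewrite (lin0 (sem_posmap wfS semE').1) mulo0 mul0o; exact: models0.
  have /models_zero QEQ0 :=
    refine21 _ _ (projector_orthc hP) projector0 PSQ_0 rho _ pdo_rho (sem_seq_assert Q semE) rhoPp.
  apply: psd_models_orthc => // [|x]; first by apply: (sem_posmap wfS semE).2; case: pdo_rho.
  by rewrite -(proj_herm hQ) -appo_ket -formo_sandw proj_herm // QEQ0 formo0.
apply: equiv_of_sem_eq => [_ [E [EQ [semE /sem_assertVE -> ->]]]|].
  exists (fun rho => Q *o E (P *o rho *o P) *o Q) => [|rho [psd_rho _]].
    exact/sem_seq_assert/sem_assert_seq.
  exact: hoare_orthc_compress hP hQ PSQ wfS semE psd_rho.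
move=> _ [_ [_ [[_ [E [/sem_assertVE -> semE ->]]] /sem_assertVE -> ->]]].
exists (fun rho => Q *o E rho *o Q) => [|rho [psd_rho _]]; first exact: sem_seq_assert.
by rewrite (hoare_orthc_compress hP hQ PSQ wfS semE psd_rho).
Qed.

End PreconditionRedundant.

(** * Strongest postconditions and weakest liberal preconditions *)

Section WeightOutside.
Context (R : realType) (I : finType).
Local Notation opr := (opr R I).
Local Notation vect := (vect R I).
Local Notation zo := (zeroo R (I:=I)).
Implicit Types (A D Q : opr) (u w : vect).

(* The trace of [orthc Q *o A *o orthc Q]. *)
Definition weight_out Q A := \sum_x formo A (colo (orthc Q) x) (colo (orthc Q) x).

Lemma weight_out_ge0 Q A : psd A -> 0 <= weight_out Q A.
Proof. by move=> /psdE[_ posA]; apply: sumr_ge0 => x _; apply: posA. Qed.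

Lemma weight_out_add Q A D : weight_out Q (addo A D) = weight_out Q A + weight_out Q D.
Proof. by rewrite /weight_out -big_split; apply: eq_bigr => x _; rewrite formo_addo. Qed.

Lemma weight_out_scale Q c A : weight_out Q (scaleo c A) = c * weight_out Q A.
Proof. by rewrite /weight_out mulr_sumr; apply: eq_bigr => x _; rewrite formo_scaleo. Qed.

Lemma weight_out_sum Q (J : Type) (s : seq J) (f : J -> opr) :
  weight_out Q (fun x y => \sum_(j <- s) f j x y) = \sum_(j <- s) weight_out Q (f j).
Proof.
elim: s => [|j s IHs].
  rewrite big_nil (_ : (fun x y => _) = zo); last by apply: opr_ext => x y; rewrite big_nil.
  by rewrite /weight_out big1 // => x _; rewrite formo0.
rewrite big_cons -IHs -weight_out_add; congr weight_out.
by apply: opr_ext => x y; rewrite big_cons.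
Qed.

Lemma models_weight_out Q A : psd A -> projector Q -> models A Q <-> weight_out Q A = 0.
Proof.
move=> psdA hQ; split=> [AQ|A0].
  have AQp : A *o orthc Q = zo.
    rewrite /orthc mulo_subr mulo1 (models_mulo_r hQ (psd_herm psdA) AQ).
    by apply: opr_ext => x y; rewrite /subo subrr.
  rewrite /weight_out big1 // => x _.
  by rewrite /formo -appo_ket -appo_mulo AQp appo_zeroo /ip big1 // => y _; rewrite mulr0.
rewrite -(orthcK Q); apply: psd_models_orthc => //; first exact: projector_orthc.
move: A0 => /eqP; rewrite psumr_eq0 => [/allP A0 x|x _]; last by have /psdE[_] := psdA; apply.
by apply/eqP; have := A0 x (mem_index_enum x).
Qed.

Lemma outer_expand u w t :
  outer (vadd u (vscale t w)) (vadd u (vscale t w)) =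
  addo (addo (outer u u) (scaleo (conjc t) (outer u w)))
       (addo (scaleo t (outer w u)) (scaleo (t * conjc t) (outer w w))).
Proof.
apply: opr_ext => x y; rewrite /outer /vadd /vscale /addo /scaleo conjcD conjcM.
by ring.
Qed.

Lemma weight_out_cross_eq0 (E : superop R I) Q u w : posmap E ->
  weight_out Q (E (outer u u)) = 0 ->
  weight_out Q (E (outer u w)) = 0 /\ weight_out Q (E (outer w u)) = 0.
Proof.
move=> [linE posE] Eu0; pose g u w := weight_out Q (E (outer u w)).
have g_ge0 v : 0 <= g v v by apply/weight_out_ge0/posE/psd_outer.
have [gwu guw] : g w u = 0 /\ g u w = 0.
  apply: (@quad_ge0_cross_eq0 _ (g u u) (g w w)).
  - exact: g_ge0.
  - exact: g_ge0.
  - by rewrite [g u u]Eu0 mul0r.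
  - move=> t; have := g_ge0 (vadd u (vscale t w)).
    rewrite /g outer_expand !(linD linE) !(linZ linE) !weight_out_add !weight_out_scale.
    by rewrite addrACA !addrA.
by [].
Qed.

Lemma outer_cols A : A = fun x y => \sum_j outer (colo A j) (ket j) x y.
Proof.
apply: opr_ext => x y; rewrite (bigD1 y) //= big1 => [|j /negbTE jy]; last first.
  by rewrite /outer /ket eq_sym jy conjc0 mulr0.
by rewrite /outer /colo /ket eqxx conjc1 mulr1 addr0.
Qed.

End WeightOutside.

Section StrongestWeakest.
Context (R : realType) (V : finType).
Local Notation B := (basis V).
Local Notation opr := (opr R B).
Local Notation vect := (vect R B).
Implicit Types (P Q W : opr) (S : prog R V).

Definition reachable P S v :=
  exists rho E u, [/\ pdo rho, models rho P, sem S E & v = appo (E rho) u].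

Lemma sp_exists P S : exists W, is_sp S P W.
Proof.
have [W [hW rangeW]] := subspace_projector (subspace_span (reachable P S)).
exists W; split=> // [rho E pdo_rho semE rhoP v|Q hQ PSQ v].
  by exists (appo (E rho) v); apply/esym/rangeW => Y _ reachY; apply: reachY; exists rho, E, v.
exists (appo W v); apply/esym.
have /rangeW spanWv : appo W (appo W v) = appo W v by rewrite -appo_mulo proj_idem.
apply: spanWv (subspace_fixpoints Q) _ => t [rho [E [u [pdo_rho rhoP semE ->]]]].
by apply/range_projector => //; exact: PSQ rho E pdo_rho semE rhoP u.
Qed.

Definition wlp_vectors Q S (u : vect) :=
  forall E, sem S E -> weight_out Q (E (outer u u)) = 0.

Lemma subspace_wlp_vectors Q S : wf S -> subspace (wlp_vectors Q S).
Proof.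
move=> wfS; split=> [E semE|u w u_wlp w_wlp E semE|c u u_wlp E semE];
  have [linE _] := sem_posmap wfS semE.
- rewrite (_ : outer _ _ = zeroo R (I:=B)) ?(lin0 linE).
    by rewrite /weight_out big1 // => x _; rewrite formo0.
  by apply: opr_ext => x y; rewrite /outer /vzero mul0r.
- have [uw wu] := weight_out_cross_eq0 w (sem_posmap wfS semE) (u_wlp E semE).
  rewrite (_ : vadd u w = vadd u (vscale 1 w)); last first.
    by apply: vect_ext => x; rewrite /vadd /vscale mul1r.
  rewrite outer_expand !(linD linE) !(linZ linE) !weight_out_add !weight_out_scale.
  by rewrite (u_wlp E semE) (w_wlp E semE) uw wu !mulr0 !addr0.
- rewrite (_ : outer _ _ = scaleo (c * conjc c) (outer u u)).
    by rewrite (linZ linE) weight_out_scale (u_wlp E semE) mulr0.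
  by apply: opr_ext => x y; rewrite /outer /vscale /scaleo conjcM; ring.
Qed.

Lemma wlp_exists Q S : projector Q -> wf S -> exists W, is_wlp S Q W.
Proof.
move=> hQ wfS; have [W [hW rangeW]] := subspace_projector (subspace_wlp_vectors Q wfS).
exists W; split=> // [rho E pdo_rho semE rhoW|P hP PSQ v].
  have [linE posE] := sem_posmap wfS semE; have [psd_rho _] := pdo_rho.
  apply/(models_weight_out (posE _ psd_rho) hQ).
  rewrite {1}(outer_cols rho) (lin_sum linE) weight_out_sum big1 // => j _.
  have col_wlp : wlp_vectors Q S (colo rho j).
    by apply/rangeW; rewrite -appo_ket -appo_mulo models_mulo.
  exact: (weight_out_cross_eq0 (ket j) (sem_posmap wfS semE) (col_wlp E semE)).1.
exists (appo P v); apply/esym/rangeW => E semE; have [_ posE] := sem_posmap wfS semE.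
apply/(models_weight_out (posE _ (psd_outer _)) hQ).
apply: hoare_psd PSQ wfS semE (psd_outer _) _.
by apply: models_outer; rewrite -appo_mulo proj_idem.
Qed.

Lemma sp_hoareP P Q S : projector Q -> sqle (sp S P) Q <-> hoare P S Q.
Proof.
move=> hQ; have [_ PSsp sp_min] : is_sp S P (sp S P) by apply: epsilon_spec; exact: sp_exists.
split=> [sp_Q rho E pdo_rho semE rhoP|]; last exact: sp_min.
exact: subsp_trans (PSsp rho E pdo_rho semE rhoP) sp_Q.
Qed.

Lemma wlp_hoareP P Q S : projector P -> projector Q -> wf S -> sqle P (wlp S Q) <-> hoare P S Q.
Proof.
move=> hP hQ wfS; have [_ wlpSQ wlp_max] : is_wlp S Q (wlp S Q).
  by apply: epsilon_spec; exact: wlp_exists.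
split=> [P_wlp rho E pdo_rho semE rhoP|]; last exact: wlp_max.
exact: wlpSQ rho E pdo_rho semE (subsp_trans rhoP P_wlp).
Qed.

End StrongestWeakest.

Theorem theorem4p6 (R : realType) (V : finType)
  (P Q : opr R (basis V)) (S : prog R V) :
  projector P -> projector Q -> wf S ->
  (* (a) *)
  ((prog_equiv (Seq (assertV P) S) (Seq (Seq (assertV P) S) (assertV Q))
      <-> sqle (sp S P) Q) /\
   (sqle (sp S P) Q <-> sqle P (wlp S Q)) /\
   (sqle P (wlp S Q) <-> hoare P S Q)) /\
  (* (b) *)
  ((prog_equiv (Seq S (assertV Q)) (Seq (Seq (assertV P) S) (assertV Q))
      <-> sqle (sp S (orthc P)) (orthc Q)) /\
   (sqle (sp S (orthc P)) (orthc Q) <-> sqle (orthc P) (wlp S (orthc Q))) /\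
   (sqle (orthc P) (wlp S (orthc Q)) <-> hoare (orthc P) S (orthc Q))).
Proof.
move=> hP hQ wfS; have hPp := projector_orthc hP; have hQp := projector_orthc hQ.
rewrite (assert_post_redundantP hP hQ wfS) (assert_pre_redundantP hP hQ wfS).
rewrite (sp_hoareP P S hQ) (wlp_hoareP hP hQ wfS).
by rewrite (sp_hoareP (orthc P) S hQp) (wlp_hoareP hPp hQp wfS).
Qed.
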